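(* Suppose a learning dynamic is lossless. Then it guarantees constant regret if and only if it is finitely lossless.
   Context: $\Delta^n=\{\mathbf{x}\in\mathbb{R}^n: x_j\ge 0,\ \sum_j x_j=1\}$; $\mathbf{e}_j$ is the $j$-th standard basis vector. A learning dynamic over $n$ actions is specified by a conversion function $f:\mathbb{R}^n\to\Delta^n$: given an initial state $\mathbf{q}^0\in\mathbb{R}^n$ and an input function $\mathbf{p}:[0,\infty)\to\mathbb{R}^n$ square integrable on bounded intervals, the state is $\mathbf{q}(t)=\mathbf{q}^0+\int_0^t\mathbf{p}(\tau)\,d\tau$ and the strategy is $\mathbf{x}(t)=f(\mathbf{q}(t))$. The learning operator with shift $\mathbf{x}^*\in\mathbb{R}^n$ has state $\mathbf{q}$, input $\mathbf{p}$, output $\mathbf{x}-\mathbf{x}^*$; it is lossless via a storage function $L:\mathbb{R}^n\to\mathbb{R}$ if for every $\mathbf{q}^0$, every $\mathbf{p}$ and every $t\ge0$, $L(\mathbf{q}(t))=L(\mathbf{q}^0)+\int_0^t\langle\mathbf{p}(\tau),\mathbf{x}(\tau)-\mathbf{x}^*\rangle\,d\tau$, and finitely lossless if it is lossless via a storage function bounded from below. A learning dynamic is lossless if its learning operator with any shift is lossless (via some storage function); it is finitely lossless if for every action $j$ its learning operator with shift $\mathbf{e}_j$ is finitely lossless. The regret at time $T>0$ is $\max_j\int_0^T p_j(\tau)\,d\tau-\int_0^T\langle\mathbf{p}(\tau),\mathbf{x}(\tau)\rangle\,d\tau$; the dynamic guarantees constant regret if for every $\mathbf{p}$ and $T>0$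 the regret at time $T$ is bounded above by a constant depending only on $\mathbf{q}^0$. *)

From HB Require Import structures.
From mathcomp Require Import all_boot all_order all_algebra.
From mathcomp Require Import all_classical all_reals all_analysis.
Set Implicit Arguments. Unset Strict Implicit. Unset Printing Implicit Defensive.
Import Order.TTheory GRing.Theory Num.Theory.
Local Open Scope classical_set_scope.
Local Open Scope ring_scope.

Section Learning.
Variables (R : realType) (n : nat).

Definition vec := 'I_n -> R.

Definition lmu := (@lebesgue_measure R).

Definition in_simplex (x : vec) : Prop :=
  (forall j, 0 <= x j) /\ \sum_(j < n) x j = 1.

Definition basis_vec (j : 'I_n) : vec := fun i => if i == j then 1 else 0.

Definition dotv (x y : vec) : R := \sum_(j < n) x j * y j.

Definition sq_int_bounded (p : R -> vec) : Prop :=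
  forall j : 'I_n, forall T : R, 0 <= T ->
    measurable_fun `[0, T] (fun t => p t j) /\
    lmu.-integrable `[0, T] (fun t => ((p t j) ^+ 2)%:E).

Definition state (q0 : vec) (p : R -> vec) (t : R) : vec :=
  fun j => q0 j + Rintegral lmu `[0, t] (fun tau => p tau j).

Definition lossless_via (f : vec -> vec) (xs : vec) (L : vec -> R) : Prop :=
  forall (q0 : vec) (p : R -> vec), sq_int_bounded p ->
  forall t : R, 0 <= t ->
    L (state q0 p t) =
    L q0 + Rintegral lmu `[0, t]
             (fun tau => dotv (p tau) (fun j => f (state q0 p tau) j - xs j)).

Definition operator_lossless (f : vec -> vec) (xs : vec) : Prop :=
  exists L : vec -> R, lossless_via f xs L.

Definition operator_finitely_lossless (f : vec -> vec) (xs : vec) : Prop :=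
  exists L : vec -> R, (exists c : R, forall q, c <= L q) /\ lossless_via f xs L.

Definition lossless_dynamic (f : vec -> vec) : Prop :=
  forall xs : vec, operator_lossless f xs.

Definition finitely_lossless_dynamic (f : vec -> vec) : Prop :=
  forall j : 'I_n, operator_finitely_lossless f (basis_vec j).

Definition regret_j (f : vec -> vec) (q0 : vec) (p : R -> vec) (T : R) (j : 'I_n) : R :=
  Rintegral lmu `[0, T] (fun tau => p tau j)
  - Rintegral lmu `[0, T] (fun tau => dotv (p tau) (f (state q0 p tau))).

(* max_j regret_j <= C  is written as  forall j, regret_j <= C *)
Definition constant_regret (f : vec -> vec) : Prop :=
  forall q0 : vec, exists C : R,
    forall p : R -> vec, sq_int_bounded p ->
    forall T : R, 0 < T -> forall j : 'I_n, regret_j f q0 p T j <= C.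

End Learning.

(* Along a constant input v, a storage function for the shift a changes by
   the integral of <v, f - a>.  For two shifts a and b these integrands
   coincide pointwise when <v, a> = <v, b>, and along v = (1, ..., 1) they are
   the constants 1 - sum a and 1 - sum b because f plays probability vectors.
   Since these directions reach every state forward in time when
   sum a <> sum b, La - Lb + <., a - b> is constant.  No other property of the
   integral is used: f need not be measurable, and Rintegral is not additive
   on non-integrable functions.  For a = e_j and b = 0 this rewrites the
   regret against action j as L(q0) - L(q(T)) for the storage L of shift e_j,
   which is bounded in terms of q0 exactly when L is bounded below. *)

From mathcomp Require Import all_boot all_order all_algebra.
From mathcomp Require Import all_classical all_reals all_analysis.
From mathcomp Require Import ring lra.
Set Implicit Arguments. Unset Strict Implicit. Unset Printing Implicit Defensive.
Import Order.TTheory GRing.Theory Num.Theory.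
Local Open Scope classical_set_scope.
Local Open Scope ring_scope.

Section DotProduct.
Variables (R : realType) (n : nat).
Implicit Types (u v w : vec R n).

Lemma dotvDZl u v w (k : R) :
  dotv (fun i => u i + k * v i) w = dotv u w + k * dotv v w.
Proof.
by rewrite /dotv mulr_sumr -big_split; apply: eq_bigr => i _; rewrite mulrDl mulrA.
Qed.

Lemma dotvBr u v w : dotv u (fun i => v i - w i) = dotv u v - dotv u w.
Proof. by rewrite /dotv -sumrB; apply: eq_bigr => i _; rewrite mulrBr. Qed.

Lemma dot1v w : dotv (fun=> 1) w = \sum_i w i.
Proof. by apply: eq_bigr => i _; rewrite mul1r. Qed.

Lemma dotv0r w : dotv w (fun=> 0) = 0.
Proof. by rewrite /dotv big1 // => i _; rewrite mulr0. Qed.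

Lemma dotv_basisr w (j : 'I_n) : dotv w (basis_vec R j) = w j.
Proof.
rewrite /dotv (bigD1 j) //= /basis_vec eqxx mulr1 big1 ?addr0 // => i /negPf ->.
by rewrite mulr0.
Qed.

End DotProduct.

Section ConstantInput.
Variables (R : realType) (n : nat).
Implicit Types (q v : vec R n).

Lemma lmu_itv0 (t : R) : 0 <= t -> @lmu R (`[0, t] : set R) = t%:E.
Proof.
move=> t0; rewrite /lmu lebesgue_measure_itv /= lte_fin.
case: ltP => [_|tle0]; first by rewrite oppr0 adde0.
by rewrite (@le_anti _ _ t 0) ?tle0.
Qed.

Lemma Rintegral_cst_itv0 (c t : R) : 0 <= t ->
  Rintegral (@lmu R) `[0, t] (fun=> c) = c * t.
Proof.
move=> t0; rewrite Rintegral_cst; last exact: measurable_itv.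
by congr (_ * _); exact: (congr1 fine (lmu_itv0 t0)).
Qed.

Lemma sq_int_bounded_cst v : sq_int_bounded (fun=> v).
Proof.
move=> j T _; split; first exact: measurable_cst.
apply: (@continuous_compact_integrable _ (fun=> v j ^+ 2)).
  exact: segment_compact.
by move=> x; exact: cst_continuous.
Qed.

Lemma state_cst q v (t : R) : 0 <= t ->
  state q (fun=> v) t = (fun i => q i + t * v i).
Proof.
by move=> t0; apply/funext => i; rewrite /state Rintegral_cst_itv0 // mulrC.
Qed.

Lemma lossless_via_cst f xs L : lossless_via f xs L ->
  forall q v (t : R), 0 <= t ->
  L (fun i => q i + t * v i) = L q + Rintegral (@lmu R) `[0, t]
    (fun tau => dotv v (fun i => f (state q (fun=> v) tau) i - xs i)).
Proof.
by move=> hL q v t t0; rewrite -(state_cst q v t0); exact: hL (sq_int_bounded_cst v) t t0.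
Qed.

End ConstantInput.

Section StorageGap.
Variables (R : realType) (n : nat) (f : vec R n -> vec R n).
Variables (a b : vec R n) (La Lb : vec R n -> R).
Hypothesis f_sum1 : forall q, \sum_i f q i = 1.
Hypotheses (hLa : lossless_via f a La) (hLb : lossless_via f b Lb).
Implicit Types (q v : vec R n).

Let gap q := La q - Lb q + dotv q a - dotv q b.

Lemma storage_gap_orthogonal q v (t : R) : 0 <= t -> dotv v a = dotv v b ->
  gap (fun i => q i + t * v i) = gap q.
Proof.
move=> t0 vab; rewrite /gap (lossless_via_cst hLa) // (lossless_via_cst hLb) //.
set F := fun tau => f (state q (fun=> v) tau).
have -> : (fun tau => dotv v (fun i => F tau i - a i)) =
          (fun tau => dotv v (fun i => F tau i - b i)).
  by apply/funext => tau; rewrite !dotvBr vab.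
by rewrite !dotvDZl vab; ring.
Qed.

Lemma storage_gap_diagonal q (t : R) : 0 <= t -> gap (fun i => q i + t * 1) = gap q.
Proof.
move=> t0; rewrite /gap (lossless_via_cst hLa) // (lossless_via_cst hLb) //.
have integrand_cst x :
    (fun tau => dotv (fun=> 1) (fun i => f (state q (fun=> fun=> 1) tau) i - x i))
    = fun=> 1 - \sum_i x i.
  by apply/funext => tau; rewrite dotvBr !dot1v f_sum1.
rewrite !integrand_cst.
rewrite !Rintegral_cst_itv0 // !dotvDZl !dot1v; ring.
Qed.

Lemma storage_gap_const : \sum_i a i != \sum_i b i -> forall q q', gap q' = gap q.
Proof.
move=> sab.
pose phi q := dotv q a - dotv q b.
pose sigma := \sum_i a i - \sum_i b i.
have sigma0 : sigma != 0 by rewrite subr_eq0.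
suff gap_forward q q' : 0 <= (phi q' - phi q) / sigma -> gap q' = gap q.
  move=> q q'; have [|s_lt0] := leP 0 ((phi q' - phi q) / sigma); first exact: gap_forward.
  by apply/esym/gap_forward; rewrite -opprB mulNr oppr_ge0 ltW.
set s := (phi q' - phi q) / sigma => s0.
pose q1 := fun i => q i + s * 1.
pose w := fun i => q' i + (-1) * q1 i.
have -> : q' = (fun i => q1 i + 1 * w i) by apply/funext => i; rewrite /w; ring.
rewrite storage_gap_orthogonal ?ler01 ?storage_gap_diagonal //.
have : s * sigma = phi q' - phi q by rewrite /s divfK.
rewrite /w /q1 !dotvDZl !dot1v /phi /sigma mulrBr; lra.
Qed.

End StorageGap.

Lemma regret_j_storage (R : realType) (n : nat) (f : vec R n -> vec R n)
    (j : 'I_n) (Lj L0 : vec R n -> R) :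
  (forall q, \sum_i f q i = 1) ->
  lossless_via f (basis_vec R j) Lj -> lossless_via f (fun=> 0) L0 ->
  forall q0 p, sq_int_bounded p -> forall T, 0 <= T ->
  regret_j f q0 p T j = Lj q0 - Lj (state q0 p T).
Proof.
move=> f_sum1 hj h0 q0 p hp T T0.
have sum_basis : \sum_i basis_vec R j i != \sum_(i < n) (0 : R).
  by rewrite -dot1v dotv_basisr big1_eq oner_neq0.
have gap_eq := storage_gap_const f_sum1 hj h0 sum_basis q0 (state q0 p T).
rewrite !dotv_basisr !dotv0r in gap_eq.
have loss0 := h0 q0 p hp T T0.
rewrite /regret_j.
have -> : (fun tau => dotv (p tau) (f (state q0 p tau))) =
          (fun tau => dotv (p tau) (fun i => f (state q0 p tau) i - 0)).
  by apply/funext => tau; rewrite dotvBr dotv0r subr0.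
change (state q0 p T j) with
  (q0 j + Rintegral (@lmu R) `[0, T] (fun tau => p tau j)) in gap_eq.
lra.
Qed.

Theorem proposition4p4 (R : realType) (n : nat) (f : vec R n -> vec R n)
  (hf : forall q, in_simplex (f q)) :
  lossless_dynamic f -> (constant_regret f <-> finitely_lossless_dynamic f).
Proof.
move=> hL; have f_sum1 q : \sum_i f q i = 1 by case: (hf q).
have [L0 h0] := hL (fun=> 0).
split.
- move=> hreg j; have [Lj hj] := hL (basis_vec R j).
  exists Lj; split => //.
  have [C hC] := hreg (fun=> 0).
  exists (Lj (fun=> 0) - C) => q.
  have reach_q : state (fun=> 0) (fun=> q) 1 = q.
    by rewrite state_cst ?ler01 //; apply/funext => i; rewrite mul1r add0r.
  have := hC (fun=> q) (sq_int_bounded_cst q) 1 ltr01 j.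
  rewrite (regret_j_storage f_sum1 hj h0 _ (sq_int_bounded_cst q) ler01) reach_q.
  lra.
- move=> hfl q0.
  have [Lf hLf] := boolp.choice hfl.
  have [c hc] := boolp.choice (fun j => proj1 (hLf j)).
  exists (\sum_j `|Lf j q0 - c j|) => p hp T T0 j.
  rewrite (regret_j_storage f_sum1 (proj2 (hLf j)) h0 q0 hp (ltW T0)).
  apply: (@le_trans _ _ (Lf j q0 - c j)); first by have := hc j (state q0 p T); lra.
  apply: le_trans (ler_norm _) _.
  by rewrite (bigD1 j) //= lerDl; apply: sumr_ge0 => i _; exact: normr_ge0.
Qed.
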